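(* Let $S$ be a poset, $S\otimes_i G_i$ a terminating ordered join, and $\sigma\colon S\to S$ a weakly order-preserving involution. Suppose $G_i\simeq_1 G_{\sigma(i)}$ for all $i\in S$ and that the set $S^\sigma=\{i\in S:\sigma(i)=i\}$ of fixed points of $\sigma$ is a lower set of $S$. Then $S\otimes_i G_i\simeq_0 S^\sigma\otimes_i G_i$, where $S^\sigma$ carries the induced order and the right-hand side is the ordered join of the games $G_i$, $i\in S^\sigma$.
   Context: All games are impartial combinatorial games under normal play; a game is determined by its set of options, and $G \to G'$ means $G'$ is an option of $G$. A game is terminating if it admits no infinite sequence of moves. $\mathbf{0}$ denotes the game with no options. The Grundy number of a terminating game $G$ is the ordinal $\Gamma_0(G)=\operatorname{mex}\{\Gamma_0(G') : G\to G'\}$, where $\operatorname{mex}\Lambda$ is the least ordinal not in the set of ordinals $\Lambda$. The Grundy set is $\Gamma_1(G)=\{\Gamma_0(G') : G\to G'\}$. $G\simeq_0 H$ means $\Gamma_0(G)=\Gamma_0(H)$; $G\simeq_1 H$ means $\Gamma_1(G)=\Gamma_1(H)$. Ordered join: for a poset $S$ and a family $(G_i)_{i\in S}$ of games, $S \otimes_i G_i$ is the game whose options are exactly the ordered joins $S \otimes_i G'_i$ obtained by choosing one $i_0\in S$ and an option $G_{i_0}\to G'_{i_0}$, and setting $G'_i=\mathbf{0}$ for all $i>i_0$ and $G'_i=G_i$ for all other $i\ne i_0$. An involution $\sigma\colon S\to S$ (i.e. $\sigma\circ\sigma=\mathrm{id}$) is weakly order-preserving if for each $i\in S$ the set $\{j\in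 S : i<j \text{ or } \sigma(i)<j\}$ is mapped onto itself by $\sigma$. A lower set $L\subseteq S$ is a subset such that $j\in L$ and $i\le j$ imply $i\in L$. *)

From HB Require Import structures.
From mathcomp Require Import all_boot all_order.
Set Implicit Arguments. Unset Strict Implicit. Unset Printing Implicit Defensive.

(* ---------- Ordinals (Brouwer/Aczel-style, arbitrary branching) ----------
   [osup A f] denotes the least ordinal strictly above every [f a],
   i.e. sup_a (f a + 1).  Ordinals are compared up to [oeq]. *)
Inductive Ord : Type := osup : forall (A : Type), (A -> Ord) -> Ord.

Fixpoint ole (x y : Ord) : Prop :=
  match x with
  | osup _ f => forall a, match y with osup _ g => exists b, ole (f a) (g b) end
  end.

Definition olt (x y : Ord) : Prop :=
  match y with osup _ g => exists b, ole x (g b) end.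

Definition oeq (x y : Ord) : Prop := ole x y /\ ole y x.

Definition is_mex (L : Ord -> Prop) (a : Ord) : Prop :=
  ~ L a /\ (forall b, olt b a -> L b).

(* ---------- Games as positions of a move graph ----------
   A game is a position [x] of a type [P] with move relation [mv]
   ([mv x y] : y is an option of x). *)
Definition terminating {P : Type} (mv : P -> P -> Prop) (x : P) : Prop :=
  ~ exists f : nat -> P, f 0 = x /\ forall n, mv (f n) (f n.+1).

Definition grundy_set {P : Type} (mv : P -> P -> Prop) (Gam : P -> Ord) (x : P)
  : Ord -> Prop := fun b => exists y, mv x y /\ oeq (Gam y) b.

Definition grundy_fun {P : Type} (mv : P -> P -> Prop) (Gam : P -> Ord) : Prop :=
  forall x, terminating mv x -> is_mex (grundy_set mv Gam x) (Gam x).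

(* Moves of a component game in [option X]; [None] is the game 0. *)
Definition mvo {X : Type} (mv : X -> X -> Prop) (a b : option X) : Prop :=
  match a, b with Some x, Some y => mv x y | _, _ => False end.

(* ---------- Ordered join ----------
   Index set [I] with strict order [lt]; positions are families of
   component positions. *)
Definition jmove {I X : Type} (lt : I -> I -> Prop) (mv : X -> X -> Prop)
  (p q : I -> option X) : Prop :=
  exists i0, mvo mv (p i0) (q i0) /\
    (forall j, lt i0 j -> q j = None) /\
    (forall j, j <> i0 -> ~ lt i0 j -> q j = p j).

Definition join_start {I X : Type} (G : I -> X) : I -> option X :=
  fun i => Some (G i).

Definition weakly_order_preserving {d : Order.disp_t} {S : porderType d}
  (sigma : S -> S) : Prop :=
  forall i : S,
    let U := fun j : S => (i < j)%O \/ (sigma i < j)%O in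
    (forall j, U j -> U (sigma j)) /\ (forall k, U k -> exists j, U j /\ sigma j = k).

Definition lower_set {d : Order.disp_t} {S : porderType d} (L : S -> Prop) : Prop :=
  forall i j : S, L j -> (i <= j)%O -> L i.

Definition fixpts {d : Order.disp_t} {S : porderType d} (sigma : S -> S) : Type :=
  {i : S | sigma i = i}.

Definition fix_lt {d : Order.disp_t} {S : porderType d} (sigma : S -> S)
  (a b : fixpts sigma) : Prop := (proj1_sig a < proj1_sig b)%O.
Arguments fix_lt {d S} sigma a b.

From mathcomp Require Import all_boot all_order.
From Stdlib Require Import Classical ClassicalEpsilon FunctionalExtensionality.
From Stdlib Require Import Relation_Operators Transitive_Closure.

(* The proof is a simulation argument.  Call a pair {i, sigma i} of
   components of a position p of the big join balanced if both components
   have the same Grundy set, or the same Grundy value while every component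
   in U(i) = {j | i < j or sigma i < j} is 0.  We relate p to its restriction
   to S^sigma whenever all pairs are balanced.  A move at a fixed point is
   copied verbatim in the other game and keeps all pairs balanced.  A move at
   a non-fixed i0 is answered inside {i0, sigma i0}, which rebalances the pair,
   empties U(i0) and, since U(i0) holds no fixed points, leaves the
   restriction unchanged.  A general simulation lemma then turns this into
   equality of Grundy values. *)

(** ** Ordinals *)

Lemma ole_refl x : ole x x.
Proof. elim: x => A f IH a /=; exists a; exact: IH. Qed.

Lemma ole_trans {x y z} : ole x y -> ole y z -> ole x z.
Proof.
elim: x y z => A f IH [B g] [C h] xy yz a.
have [b fg] := xy a; have [c gh] := yz b.
by exists c; apply: IH fg gh.
Qed.

Lemma oeq_refl x : oeq x x.
Proof. by split; apply: ole_refl. Qed.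

Lemma oeq_sym {x y} : oeq x y -> oeq y x.
Proof. by case. Qed.

Lemma oeq_trans {x y z} : oeq x y -> oeq y z -> oeq x z.
Proof. by case=> xy yx [yz zy]; split; apply: ole_trans; eassumption. Qed.

Lemma ole_or_olt x y : ole x y \/ olt y x.
Proof.
elim: x y => A f IH [B g].
have [le|] := classic (forall a, exists b, ole (f a) (g b)); first by left.
move=> /not_all_ex_not [a nle]; right; exists a.
move: (IH a) nle; case: (f a) => C h IHa nle b.
have [le|//] := IHa (g b).
by exfalso; apply: nle; exists b.
Qed.

Lemma ord_trichotomy x y : olt x y \/ olt y x \/ oeq x y.
Proof.
have [xy|] := ole_or_olt x y; last tauto.
have [yx|] := ole_or_olt y x; last tauto.
by right; right.
Qed.

Section Termination.
Context {P : Type} {mv : P -> P -> Prop}.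

(* Dependent choice: a property that can always be propagated along a move
   yields an infinite play. *)
Lemma infinite_play {Q : P -> Prop} :
  (forall y, Q y -> exists z, mv y z /\ Q z) ->
  forall x, Q x -> exists f : nat -> P, f 0 = x /\ forall n, mv (f n) (f n.+1).
Proof.
move=> step x Qx.
pose next (s : {y | Q y}) : {y | Q y} :=
  let e := constructive_indefinite_description _ (step _ (proj2_sig s)) in
  exist _ (proj1_sig e) (proj2 (proj2_sig e)).
exists (fun n => proj1_sig (iter n next (exist _ x Qx))); split=> // n.
rewrite iterS /next /=.
by case: constructive_indefinite_description => z [].
Qed.

(* A terminating position is accessible for the converse move relation,
   which allows well-founded induction along plays. *)
Lemma terminating_Acc {x} : terminating mv x -> Acc (fun a b => mv b a) x.
Proof.
move=> term; apply: NNPP => nacc; apply: term.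
apply: (@infinite_play (fun y => ~ Acc (fun a b => mv b a) y)) nacc.
move=> y nacc_y; apply: NNPP => stuck; apply: nacc_y; constructor=> z yz.
by apply: NNPP => nacc_z; apply: stuck; exists z.
Qed.

Lemma terminating_move {x y} : terminating mv x -> mv x y -> terminating mv y.
Proof.
move=> term xy [f [f0 fmv]]; apply: term.
exists (fun n => if n is n'.+1 then f n' else x); split=> // [[|n]] /=.
- by rewrite f0.
- exact: fmv.
Qed.

End Termination.

Lemma terminating_transfer {P Q : Type} {mvP : P -> P -> Prop} {mvQ : Q -> Q -> Prop}
    {R : P -> Q -> Prop} :
  (forall p q q', R p q -> mvQ q q' -> exists p', mvP p p' /\ R p' q') ->
  forall p q, R p q -> terminating mvP p -> terminating mvQ q.
Proof.
move=> sim p q pq term [f [f0 fmv]]; apply: term.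
(* Shadow the infinite play [f] step by step, remembering the current index. *)
pose mvN (a b : P * nat) := mvP a.1 b.1 /\ b.2 = a.2.+1.
have step (a : P * nat) : R a.1 (f a.2) -> exists b, mvN a b /\ R b.1 (f b.2).
  case: a => a n /= Ra; have [a' [aa' Ra']] := sim _ _ _ Ra (fmv n).
  by exists (a', n.+1).
have R0 : R (p, 0).1 (f (p, 0).2) by rewrite /= f0.
have [g [g0 gmv]] := infinite_play step (p, 0) R0.
by exists (fun n => (g n).1); rewrite g0; split=> // n; case: (gmv n).
Qed.

(** ** Grundy functions *)

Section GrundyFunction.
Context {P : Type} {mv : P -> P -> Prop} {Gam : P -> Ord}.
Hypothesis grundy_Gam : grundy_fun mv Gam.

Lemma grundy_option_neq {x y} :
  terminating mv x -> mv x y -> ~ oeq (Gam y) (Gam x).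
Proof. by move=> term xy eq; apply: (proj1 (grundy_Gam _ term)); exists y. Qed.

Lemma grundy_option_below {x b} :
  terminating mv x -> olt b (Gam x) -> exists y, mv x y /\ oeq (Gam y) b.
Proof. by move=> term /(proj2 (grundy_Gam _ term)). Qed.

Lemma mirror_reply {x x' y} :
  (forall b, grundy_set mv Gam x b <-> grundy_set mv Gam x' b) ->
  mv x y -> exists y', mv x' y' /\ oeq (Gam y') (Gam y).
Proof. by move=> same xy; apply/same; exists y; split=> //; apply: oeq_refl. Qed.

Lemma equal_value_reply {x x' y} :
  terminating mv x -> terminating mv x' -> oeq (Gam x) (Gam x') -> mv x y ->
  (exists y', mv x' y' /\ oeq (Gam y') (Gam y)) \/
  (exists z, mv y z /\ oeq (Gam z) (Gam x')).
Proof.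
move=> term term' eq xy.
have [lt|[gt|eq']] := ord_trichotomy (Gam y) (Gam x').
- by left; apply: grundy_option_below term' lt.
- by right; apply: grundy_option_below (terminating_move term xy) gt.
- by exfalso; apply: (grundy_option_neq term xy); apply: oeq_trans eq' (oeq_sym eq).
Qed.

End GrundyFunction.

Lemma grundy_eq_of_simulation {P Q : Type} {mvP : P -> P -> Prop} {mvQ : Q -> Q -> Prop}
    {GamP : P -> Ord} {GamQ : Q -> Ord} (R : P -> Q -> Prop) :
  grundy_fun mvP GamP -> grundy_fun mvQ GamQ ->
  (forall p q, R p q -> terminating mvP p) ->
  (forall p q p', R p q -> mvP p p' ->
     (exists p'', mvP p' p'' /\ R p'' q) \/ (exists q', mvQ q q' /\ R p' q')) ->
  (forall p q q', R p q -> mvQ q q' -> exists p', mvP p p' /\ R p' q') ->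
  forall p q, R p q -> oeq (GamP p) (GamQ q).
Proof.
move=> grundyP grundyQ termR moveP moveQ p q pq.
have := Acc_clos_trans P (fun a b => mvP b a) p (terminating_Acc (termR _ _ pq)).
move=> acc; elim: acc q pq => {}p _ IH q pq.
have termp := termR _ _ pq.
have termq := terminating_transfer moveQ _ _ pq termp.
have IH1 p' q' : mvP p p' -> R p' q' -> oeq (GamP p') (GamQ q').
  by move=> pp'; apply: IH; apply: t_step.
have [lt|[gt|//]] := ord_trichotomy (GamP p) (GamQ q).
- have [q' [qq' eq']] := grundy_option_below grundyQ termq lt.
  have [p' [pp' Rp'q']] := moveQ _ _ _ pq qq'.
  exfalso; apply: (grundy_option_neq grundyP termp pp').
  exact: oeq_trans (IH1 _ _ pp' Rp'q') eq'.
- have [p' [pp' eq']] := grundy_option_below grundyP termp gt.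
  have [[p'' [p'p'' Rp''q]]|[q' [qq' Rp'q']]] := moveP _ _ _ pq pp'.
  + have IH2 : oeq (GamP p'') (GamQ q).
      by apply: IH (Rp''q); apply: t_trans (t_step _ _ _ _ p'p'') (t_step _ _ _ _ pp').
    exfalso; apply: (grundy_option_neq grundyP (terminating_move termp pp') p'p'').
    exact: oeq_trans IH2 (oeq_sym eq').
  + exfalso; apply: (grundy_option_neq grundyQ termq qq').
    exact: oeq_trans (oeq_sym (IH1 _ _ pp' Rp'q')) eq'.
Qed.

Lemma grundy_eq_no_moves {P Q : Type} {mvP : P -> P -> Prop} {mvQ : Q -> Q -> Prop}
    {GamP : P -> Ord} {GamQ : Q -> Ord} p q :
  grundy_fun mvP GamP -> grundy_fun mvQ GamQ ->
  (forall p', ~ mvP p p') -> (forall q', ~ mvQ q q') -> oeq (GamP p) (GamQ q).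
Proof.
move=> grundyP grundyQ endp endq.
apply: (grundy_eq_of_simulation (fun p' q' => p' = p /\ q' = q) grundyP grundyQ) => //.
- by move=> p' q' [-> _] [f [f0 fmv]]; apply: (endp (f 1)); rewrite -f0.
- by move=> p'' q' p' [-> _] /endp.
- by move=> p' q'' q' [_ ->] /endq.
Qed.

Section Comap.
Context {P Q : Type} {mvP : P -> P -> Prop} {mvQ : Q -> Q -> Prop} {f : P -> Q}.
Hypothesis mvQ_f : forall x z, mvQ (f x) z <-> exists y, mvP x y /\ z = f y.

Lemma grundy_set_comap (GamQ : Q -> Ord) x b :
  grundy_set mvP (fun y => GamQ (f y)) x b <-> grundy_set mvQ GamQ (f x) b.
Proof.
split=> [[y [xy eq]]|[z [fxz eq]]].
- by exists (f y); split=> //; apply/mvQ_f; exists y.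
- by have [y [xy ez]] := iffLR (mvQ_f _ _) fxz; exists y; rewrite -ez.
Qed.

Lemma grundy_fun_comap {GamQ : Q -> Ord} :
  grundy_fun mvQ GamQ -> grundy_fun mvP (fun y => GamQ (f y)).
Proof.
move=> grundyQ x term.
have termf : terminating mvQ (f x).
  apply: (terminating_transfer (R := fun y z => z = f y)) term => // y _ z -> /mvQ_f.
  by move=> [y' [yy' ->]]; exists y'.
have [nin below] := grundyQ _ termf.
split=> [/(grundy_set_comap GamQ) //|b /below].
exact: (iffRL (grundy_set_comap GamQ x b)).
Qed.

End Comap.

Import Order.POrderTheory.
Local Open Scope order_scope.

(** ** Weakly order-preserving involutions *)

Definition above {d : Order.disp_t} {S : porderType d} (sigma : S -> S) (i j : S) : Prop :=
  i < j \/ sigma i < j.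

Section Involution.
Context {d : Order.disp_t} {S : porderType d} {sigma : S -> S}.
Hypothesis sigmaK : forall i, sigma (sigma i) = i.
Hypothesis wop : weakly_order_preserving sigma.
Hypothesis fixed_lower : lower_set (fun i => sigma i = i).

Lemma above_sigma {i j} : above sigma i j -> above sigma i (sigma j).
Proof. exact: (proj1 (wop i) j). Qed.

Lemma aboveS i j : above sigma (sigma i) j <-> above sigma i j.
Proof. by rewrite /above sigmaK; tauto. Qed.

Lemma not_above_self i : ~ above sigma i i.
Proof.
move=> [ii|si_i]; first by rewrite ltxx in ii.
have [i_si|] := above_sigma (or_intror si_i : above sigma i i).
  by move: (lt_asym i (sigma i)); rewrite i_si si_i.
by rewrite ltxx.
Qed.

Lemma not_above_sigma i : ~ above sigma i (sigma i).
Proof. by move=> /above_sigma; rewrite sigmaK; apply: not_above_self. Qed.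

(* Since the fixed points form a lower set, U(i) contains no fixed point
   when i itself is not fixed. *)
Lemma above_unfixed {i j} : sigma i <> i -> above sigma i j -> sigma j <> j.
Proof.
move=> ni [ij|sij] fj; apply: ni.
  exact: fixed_lower _ _ fj (ltW ij).
by have := fixed_lower _ _ fj (ltW sij); rewrite sigmaK; move/esym.
Qed.

Lemma fixed_lt_sigma {k j} : sigma k = k -> k < j -> k < sigma j.
Proof.
move=> fk kj; have [//|] := above_sigma (or_introl kj : above sigma k j).
by rewrite fk.
Qed.

End Involution.

(** ** Positions of an ordered join *)

Section OrderedJoin.
Context {d : Order.disp_t} {S : porderType d} {X : Type} {mv : X -> X -> Prop}.
Local Notation jmv := (jmove (fun i j : S => i < j) mv).

Definition upd (p : S -> option X) (i : S) (o : option X) : S -> option X :=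
  fun j => if j == i then o else if i < j then None else p j.

Lemma upd_at p i o : upd p i o i = o.
Proof. by rewrite /upd eqxx. Qed.

Lemma upd_gt p i o j : i < j -> upd p i o j = None.
Proof. by move=> ij; rewrite /upd gt_eqF // ij. Qed.

Lemma upd_other p i o j : j != i -> ~~ (i < j) -> upd p i o j = p j.
Proof. by move=> ji /negbTE ij; rewrite /upd (negbTE ji) ij. Qed.

Lemma upd_upd p i o o' : upd (upd p i o) i o' = upd p i o'.
Proof.
apply: functional_extensionality => j; rewrite /upd.
by case: (eqVneq j i) => // _; case: ifP => // ->.
Qed.

Lemma jmove_upd {p i o} : mvo mv (p i) o -> jmv p (upd p i o).
Proof.
move=> pio; exists i; split; first by rewrite upd_at.
split=> [j|j /eqP ji /negP ij]; [exact: upd_gt | exact: upd_other].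
Qed.

Lemma jmoveE p p' : jmv p p' -> exists i o, mvo mv (p i) o /\ p' = upd p i o.
Proof.
move=> [i [pi [above_i others]]]; exists i, (p' i); split=> //.
apply: functional_extensionality => j; rewrite /upd.
case: eqVneq => [-> //|/eqP ji]; case: ifP => [|/negbT/negP]; first exact: above_i.
exact: others.
Qed.

Lemma terminating_component p i : terminating jmv p -> terminating (mvo mv) (p i).
Proof.
apply: (terminating_transfer (R := fun p o => p i = o)) => // q _ o' <- qo'.
by exists (upd q i o'); split; [apply: jmove_upd | rewrite upd_at].
Qed.

Definition single (i : S) (o : option X) : S -> option X := upd (fun _ => None) i o.

Lemma jmove_single i o r : jmv (single i o) r <-> exists o', mvo mv o o' /\ r = single i o'.
Proof.
split=> [/jmoveE [j [o' [mo' ->]]]|[o' [oo' ->]]].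
- have ji : j = i by move: mo'; rewrite /single /upd; case: eqVneq => // _; case: ifP.
  by subst j; exists o'; move: mo'; rewrite /single upd_upd upd_at.
- by rewrite /single -(upd_upd _ i o o'); apply: jmove_upd; rewrite upd_at.
Qed.

Lemma grundy_single (i : S) {Gam : (S -> option X) -> Ord} :
  grundy_fun jmv Gam -> grundy_fun (mvo mv) (fun o => Gam (single i o)).
Proof. exact: (grundy_fun_comap (jmove_single i)). Qed.

End OrderedJoin.

Lemma mvo_Some {X : Type} (mv : X -> X -> Prop) x z :
  mvo mv (Some x) z <-> exists y, mv x y /\ z = Some y.
Proof.
case: z => [y|] /=; split=> [xy|[y' [xy' e]]] //; first by exists y.
by case: e => ->.
Qed.

(** ** The balance invariant *)

Section Invariant.
Context {d : Order.disp_t} {S : porderType d} {X : Type}.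
Variables (mv : X -> X -> Prop) (sigma : S -> S) (Go : option X -> Ord).
Hypothesis sigmaK : forall i, sigma (sigma i) = i.
Hypothesis wop : weakly_order_preserving sigma.
Hypothesis fixed_lower : lower_set (fun i => sigma i = i).
Local Notation jmv := (jmove (fun i j : S => i < j) mv).

Definition pair_ok (p : S -> option X) (i : S) : Prop :=
  (forall b, grundy_set (mvo mv) Go (p i) b <-> grundy_set (mvo mv) Go (p (sigma i)) b) \/
  (oeq (Go (p i)) (Go (p (sigma i))) /\ forall j, above sigma i j -> p j = None).

Lemma pair_ok_fixed_move p k o i :
  sigma k = k -> pair_ok p i -> pair_ok (upd p k o) i.
Proof.
move=> fk pi.
have [fi|/eqP ni] := eqVneq (sigma i) i; first by left=> b; rewrite fi.
have [ki|nki] := boolP (k < i).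
  by left=> b; rewrite !upd_gt // (fixed_lt_sigma wop fk ki).
have ik : i != k by apply/eqP => ik; apply: ni; rewrite ik fk.
have sik : sigma i != k by apply/eqP => sik; apply: ni; rewrite -{2}(sigmaK i) sik fk.
have nksi : ~~ (k < sigma i) by apply: contraNN nki => /(fixed_lt_sigma wop fk); rewrite sigmaK.
rewrite /pair_ok !upd_other //.
case: pi => [same|[eq van]]; [by left | right; split=> // j ij].
have [kj|nkj] := boolP (k < j); first exact: upd_gt.
have jk : j != k.
  by apply/eqP => jk; apply: (above_unfixed sigmaK fixed_lower ni ij); rewrite jk fk.
by rewrite upd_other // van.
Qed.

Definition agree_off (i0 : S) (p p' : S -> option X) : Prop :=
  forall j, j <> i0 -> j <> sigma i0 -> ~ above sigma i0 j -> p' j = p j.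

Lemma agree_off_trans i0 p p' p'' :
  agree_off i0 p p' -> agree_off i0 p' p'' -> agree_off i0 p p''.
Proof. by move=> pp' p'p'' j ji0 jsi0 nu; rewrite p'p'' // pp'. Qed.

Lemma agree_off_upd i0 r p o : r = i0 \/ r = sigma i0 -> agree_off i0 p (upd p r o).
Proof.
move=> hr j ji0 jsi0 nu; apply: upd_other.
  by apply/eqP; case: hr => ->.
by apply/negP => rj; apply: nu; case: hr rj => -> rj; [left | right].
Qed.

Lemma pair_ok_restore p p' i0 :
  p i0 <> None -> agree_off i0 p p' -> (forall j, above sigma i0 j -> p' j = None) ->
  oeq (Go (p' i0)) (Go (p' (sigma i0))) ->
  (forall i, pair_ok p i) -> forall i, pair_ok p' i.
Proof.
move=> pi0 keep van eq0 ok i.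
have [->|/eqP ni0] := eqVneq i i0; first by right.
have [->|/eqP nsi0] := eqVneq i (sigma i0).
  right; rewrite sigmaK; split; first exact: oeq_sym.
  by move=> j /(aboveS sigmaK); apply: van.
have [ui|nui] := classic (above sigma i0 i).
  by left=> b; rewrite (van i) // (van _ (above_sigma wop ui)).
have nusi : ~ above sigma i0 (sigma i) by move=> /(above_sigma wop); rewrite sigmaK.
have si_i0 : sigma i <> i0 by move=> e; apply: nsi0; rewrite -e sigmaK.
have si_si0 : sigma i <> sigma i0 by move=> e; apply: ni0; rewrite -(sigmaK i) e sigmaK.
rewrite /pair_ok (keep i) // (keep (sigma i)) //.
case: (ok i) => [same|[eq van_i]]; [by left | right; split=> // j ij].
have no_i0 : ~ above sigma i i0 by move/van_i.
have [uj|nuj] := classic (above sigma i0 j); first exact: van.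
have [ji0|/eqP nji0] := eqVneq j i0; first by rewrite ji0 in ij.
have [jsi0|/eqP njsi0] := eqVneq j (sigma i0).
  by have := above_sigma wop ij; rewrite jsi0 sigmaK.
by rewrite keep // van_i.
Qed.

Definition restrict (p : S -> option X) : fixpts sigma -> option X :=
  fun k => p (proj1_sig k).

(* The block of a non-fixed point contains no fixed point. *)
Lemma restrict_agree_off i0 p p' :
  sigma i0 <> i0 -> agree_off i0 p p' -> restrict p' = restrict p.
Proof.
move=> ni0 keep; apply: functional_extensionality => -[k fk].
rewrite /restrict /=; apply: keep.
- by move=> ki0; apply: ni0; rewrite -ki0.
- by move=> ksi0; apply: ni0; move: fk; rewrite ksi0 sigmaK => <-.
- by move=> /(above_unfixed sigmaK fixed_lower ni0).
Qed.

Lemma fixpts_eq (a b : fixpts sigma) : proj1_sig a = proj1_sig b -> a = b.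
Proof. by case: a b => [a fa] [b fb] /= ab; subst b; rewrite (eq_irrelevance fa fb). Qed.

Lemma jmove_restrict p k o :
  sigma k = k -> mvo mv (p k) o -> jmove (fix_lt sigma) mv (restrict p) (restrict (upd p k o)).
Proof.
move=> fk pko; exists (exist (fun i => sigma i = i) k fk).
split; first by rewrite /restrict upd_at.
split=> [j kj|j jk nkj]; first exact: upd_gt.
apply: upd_other; last exact/negP.
by apply/eqP => e; apply: jk; apply: fixpts_eq.
Qed.

Lemma jmove_restrictE p q' :
  jmove (fix_lt sigma) mv (restrict p) q' ->
  exists k o, sigma k = k /\ mvo mv (p k) o /\ q' = restrict (upd p k o).
Proof.
move=> [[k fk] [pko [zero keep]]].
exists k, (q' (exist (fun i => sigma i = i) k fk)); do 2!split=> //.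
apply: functional_extensionality => -[j fj]; rewrite /restrict /upd /=.
have [jk|njk] := eqVneq j k; first by congr q'; apply: fixpts_eq.
case: ifP => [kj|/negbT/negP nkj]; first exact: zero.
apply: keep => // e; move/eqP: njk; apply; exact: (f_equal (@proj1_sig _ _) e).
Qed.

Hypothesis grundy_Go : grundy_fun (mvo mv) Go.

Definition good (p : S -> option X) : Prop := terminating jmv p /\ forall i, pair_ok p i.

Lemma good_fixed_move p k o : sigma k = k -> mvo mv (p k) o -> good p -> good (upd p k o).
Proof.
move=> fk pko [term ok]; split; first exact: terminating_move term (jmove_upd pko).
by move=> i; apply: pair_ok_fixed_move.
Qed.

Lemma upd_at_sigma (p : S -> option X) i0 o :
  sigma i0 <> i0 -> upd p i0 o (sigma i0) = p (sigma i0).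
Proof.
move=> ni0; apply: upd_other; first exact/eqP.
by apply/negP => lt; apply: (not_above_sigma sigmaK wop i0); left.
Qed.

Lemma upd_sigma_at (p : S -> option X) i0 o :
  sigma i0 <> i0 -> upd p (sigma i0) o i0 = p i0.
Proof.
move=> ni0; apply: upd_other; first by apply/eqP => e; apply: ni0; rewrite -e.
by apply/negP => lt; apply: (not_above_self wop i0); right.
Qed.

Lemma reply_at_sigma p i0 y z :
  good p -> sigma i0 <> i0 -> mvo mv (p i0) y -> mvo mv (p (sigma i0)) z ->
  oeq (Go z) (Go y) ->
  jmv (upd p i0 y) (upd (upd p i0 y) (sigma i0) z) /\
  good (upd (upd p i0 y) (sigma i0) z) /\
  restrict (upd (upd p i0 y) (sigma i0) z) = restrict p.
Proof.
move=> [term ok] ni0 pi0y psi0z yz.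
set p' := upd p i0 y; set p'' := upd p' (sigma i0) z.
have move2 : jmv p' p'' by apply: jmove_upd; rewrite /p' upd_at_sigma.
have keep : agree_off i0 p p''.
  by apply: (agree_off_trans i0 p p'); apply: agree_off_upd; [left | right].
have van j : above sigma i0 j -> p'' j = None.
  move=> uj; have [sj|nsj] := boolP (sigma i0 < j); first exact: upd_gt.
  rewrite /p'' upd_other //.
    by case: uj => [ij|sj]; [apply: upd_gt | rewrite sj in nsj].
  by apply/eqP => e; apply: (not_above_sigma sigmaK wop i0); rewrite -e.
have eq0 : oeq (Go (p'' i0)) (Go (p'' (sigma i0))).
  by rewrite /p'' /p' upd_sigma_at // !upd_at; apply: oeq_sym.
split=> //; split; last exact: restrict_agree_off ni0 keep.
split; first exact: terminating_move (terminating_move term (jmove_upd pi0y)) move2.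
by apply: pair_ok_restore keep van eq0 ok => pi0; rewrite pi0 in pi0y.
Qed.

Lemma reply_at_same p i0 y z :
  good p -> sigma i0 <> i0 -> mvo mv (p i0) y -> (forall j, above sigma i0 j -> p j = None) ->
  mvo mv y z -> oeq (Go z) (Go (p (sigma i0))) ->
  jmv (upd p i0 y) (upd p i0 z) /\ good (upd p i0 z) /\ restrict (upd p i0 z) = restrict p.
Proof.
move=> [term ok] ni0 pi0y van_p yz eqz.
have move2 : jmv (upd p i0 y) (upd p i0 z).
  by rewrite -(upd_upd p i0 y z); apply: jmove_upd; rewrite upd_at.
have keep : agree_off i0 p (upd p i0 z) by apply: agree_off_upd; left.
have van j : above sigma i0 j -> upd p i0 z j = None.
  move=> uj; have [ij|nij] := boolP (i0 < j); first exact: upd_gt.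
  rewrite upd_other ?van_p //.
  by apply/eqP => e; apply: (not_above_self wop i0); rewrite -{2}e.
have eq0 : oeq (Go (upd p i0 z i0)) (Go (upd p i0 z (sigma i0))).
  by rewrite upd_at upd_at_sigma.
split=> //; split; last exact: restrict_agree_off ni0 keep.
split; first exact: terminating_move (terminating_move term (jmove_upd pi0y)) move2.
by apply: pair_ok_restore keep van eq0 ok => pi0; rewrite pi0 in pi0y.
Qed.

Lemma good_reply {p i0 y} :
  good p -> sigma i0 <> i0 -> mvo mv (p i0) y ->
  exists p'', jmv (upd p i0 y) p'' /\ good p'' /\ restrict p'' = restrict p.
Proof.
move=> gp ni0 pi0y; have [term ok] := gp.
case: (ok i0) => [same|[eq0 van]].
  have [z [psi0z zy]] := mirror_reply same pi0y.
  by eexists; apply: reply_at_sigma gp ni0 pi0y psi0z zy.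
have term_i0 := terminating_component p i0 term.
have term_si0 := terminating_component p (sigma i0) term.
have [[z [psi0z zy]]|[z [yz zsi0]]] := equal_value_reply grundy_Go term_i0 term_si0 eq0 pi0y.
  by eexists; apply: reply_at_sigma gp ni0 pi0y psi0z zy.
by eexists; apply: reply_at_same gp ni0 pi0y van yz zsi0.
Qed.

Definition related (p : S -> option X) (q : fixpts sigma -> option X) : Prop :=
  good p /\ q = restrict p.

Lemma related_join_move p q p' :
  related p q -> jmv p p' ->
  (exists p'', jmv p' p'' /\ related p'' q) \/
  (exists q', jmove (fix_lt sigma) mv q q' /\ related p' q').
Proof.
move=> [gp ->] /jmoveE [i0 [y [pi0y ->]]].
have [fi0|/eqP ni0] := eqVneq (sigma i0) i0.
  right; exists (restrict (upd p i0 y)); split; first exact: jmove_restrict.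
  by split=> //; apply: good_fixed_move.
by left; have [p'' [m [gp'' r]]] := good_reply gp ni0 pi0y; exists p''.
Qed.

Lemma related_fixpts_move p q q' :
  related p q -> jmove (fix_lt sigma) mv q q' -> exists p', jmv p p' /\ related p' q'.
Proof.
move=> [gp ->] /jmove_restrictE [k [o [fk [pko ->]]]].
by exists (upd p k o); split; [apply: jmove_upd | split=> //; apply: good_fixed_move].
Qed.

End Invariant.

Local Close Scope order_scope.

Theorem mainTheorem9 (d : Order.disp_t) (S : porderType d)
  (X : Type) (mv : X -> X -> Prop) (G : S -> X) (sigma : S -> S) :
  terminating (jmove (fun i j : S => (i < j)%O) mv) (join_start G) ->
  (forall i, sigma (sigma i) = i) ->
  weakly_order_preserving sigma ->
  (forall Gam : X -> Ord, grundy_fun mv Gam ->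
     forall i b, grundy_set mv Gam (G i) b <-> grundy_set mv Gam (G (sigma i)) b) ->
  lower_set (fun i => sigma i = i) ->
  forall (Gam1 : (S -> option X) -> Ord) (Gam2 : (fixpts sigma -> option X) -> Ord),
    grundy_fun (jmove (fun i j : S => (i < j)%O) mv) Gam1 ->
    grundy_fun (jmove (fix_lt sigma) mv) Gam2 ->
    oeq (Gam1 (join_start G)) (Gam2 (join_start (fun i : fixpts sigma => G (proj1_sig i)))).
Proof.
move=> term sigmaK wop hG fixed_lower Gam1 Gam2 grundy1 grundy2.
(* Over an empty poset both joins have no moves at all. *)
have [[i0]|noS] := classic (inhabited S); last first.
  apply: (grundy_eq_no_moves _ _ grundy1 grundy2) => [p [i _]|q [[i _] _]]; exact: noS.
(* Grundy functions on components, read off one-component positions. *)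
pose Go o := Gam1 (single i0 o).
have grundy_Go : grundy_fun (mvo mv) Go := grundy_single i0 grundy1.
have grundy_GX := grundy_fun_comap (mvo_Some mv) grundy_Go.
apply: (grundy_eq_of_simulation (related mv sigma Go) grundy1 grundy2).
- by move=> p q [[]].
- exact: related_join_move.
- exact: related_fixpts_move.
(* Initially every pair is balanced by the hypothesis on the G_i. *)
- split=> //; split=> // i; left=> b.
  rewrite /join_start -!(grundy_set_comap (mvo_Some mv)).
  exact: hG _ grundy_GX i b.
Qed.
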